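(* Let $A=S_{\mathbf q}(V)$ and let $K_\bullet$ be its Koszul bimodule resolution (defined in the context). Define left $A$-module maps $t_{-1}\colon A\to A\otimes A$ by $t_{-1}(1)=1\otimes 1$ and, for $p\ge 0$, $t_p\colon K_p\to K_{p+1}$ on the left $A$-basis elements $1\otimes(x_{j_1}\wedge\cdots\wedge x_{j_p})\otimes\underline{x}^{\underline{\ell}}$ ($1\le j_1<\cdots<j_p\le N$, $\underline{\ell}\in\mathbb{N}^N$) by $$t_p\big(1\otimes(x_{j_1}\wedge\cdots\wedge x_{j_p})\otimes\underline{x}^{\underline{\ell}}\big)=(-1)^{p+1}\sum_{j_{p+1}=j_p+1}^{N}\sum_{r=1}^{\ell_{j_{p+1}}}\lambda^{(\underline{\ell};j_1,\dots,j_p)}_{j_{p+1},r}\ x_{j_{p+1}}^{\ell_{j_{p+1}}-r}x_{j_{p+1}+1}^{\ell_{j_{p+1}+1}}\cdots x_N^{\ell_N}\otimes(x_{j_1}\wedge\cdots\wedge x_{j_{p+1}})\otimes x_1^{\ell_1}\cdots x_{j_{p+1}-1}^{\ell_{j_{p+1}-1}}x_{j_{p+1}}^{r-1},$$ where (writing $m=j_{p+1}$) $$\lambda^{(\underline{\ell};j_1,\dots,j_p)}_{m,r}=\Big(\prod_{s=1}^{m-1}\prod_{t=m}^{N}q_{s,t}^{\ell_s\ell_t}\Big)\Big(\prod_{t=1}^Nq_{m,t}^{\ell_t}\Big)^{r-1}\Big(\prod_{t=1}^pq_{j_t,m}^{\ell_m-r}\Big)\Big(\prod_{s=1}^{p+1}\prod_{t=m+1}^Nq_{j_s,t}^{\ell_t}\Big),$$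 with the convention $j_0=0$ when $p=0$, and extended left $A$-linearly. Then $d_0t_{-1}=\mathrm{Id}_A$ and $t_{p-1}d_p+d_{p+1}t_p=\mathrm{Id}_{K_p}$ for all $p\ge0$, i.e. $(t_p)_{p\ge-1}$ is a chain contraction of $K_\bullet$.
   Context: $\mathbb{k}$ is a field, $N\ge1$, and $\mathbf q=(q_{i,j})_{1\le i,j\le N}$ are nonzero scalars in $\mathbb{k}$ with $q_{i,i}=1$ and $q_{j,i}=q_{i,j}^{-1}$. $V$ has basis $x_1,\dots,x_N$, and $S_{\mathbf q}(V)=\mathbb{k}\langle x_1,\dots,x_N\mid x_ix_j=q_{i,j}x_jx_i\ \forall i,j\rangle$ is the quantum symmetric algebra; the ordered monomials $\underline{x}^{\underline{\ell}}=x_1^{\ell_1}\cdots x_N^{\ell_N}$, $\underline{\ell}\in\mathbb{N}^N$, form a $\mathbb{k}$-basis. The Koszul resolution $K_\bullet$ of $A=S_{\mathbf q}(V)$ has $K_p=A\otimes\bigwedge^p(V)\otimes A$ ($0\le p\le N$), the free $A$-bimodule with basis $1\otimes(x_{j_1}\wedge\cdots\wedge x_{j_p})\otimes1$, $1\le j_1<\cdots<j_p\le N$; $d_0$ is multiplication and for $p\ge1$ $$d_p(1\otimes(x_{j_1}\wedge\cdots\wedge x_{j_p})\otimes1)=\sum_{i=1}^p(-1)^{i+1}\Big(\prod_{s=1}^iq_{j_s,j_i}\Big)x_{j_i}\otimes(x_{j_1}\wedge\cdots\widehat{x_{j_i}}\cdots\wedge x_{j_p})\otimes1-\sum_{i=1}^p(-1)^{i+1}\Big(\prod_{s=i}^pq_{j_i,j_s}\Big)1\otimes(x_{j_1}\wedge\cdots\widehat{x_{j_i}}\cdots\wedge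 x_{j_p})\otimes x_{j_i},$$ where the hat denotes omission. *)

From HB Require Import structures.
From mathcomp Require Import all_boot all_order all_algebra.
Set Implicit Arguments. Unset Strict Implicit. Unset Printing Implicit Defensive.
Import Order.TTheory GRing.Theory.
Local Open Scope ring_scope.

(* Model:
   - variables x_1..x_N are indexed (0-based) by 'I_N;
   - an ordered monomial x^l is l : mono N = {ffun 'I_N -> nat};
   - a wedge x_{j_1}/\../\x_{j_p} with j_1<..<j_p is the set {j_1,..,j_p};
   - the k-basis of K_p = A (x) /\^p V (x) A consists of triples
     (a, J, b) standing for x^a (x) x_J (x) x^b with #|J| = p;
   - vectors are formal k-linear combinations (seq (k * basis)), compared
     through their coefficient functions [coef];
   - maps are given on basis elements and extended linearly by [lext]. *)

Definition mono (N : nat) := {ffun 'I_N -> nat}.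
Definition kbasis (N : nat) := (mono N * {set 'I_N} * mono N)%type.
Definition fsum (k : Type) (B : Type) := seq (k * B).

Definition coef (k : fieldType) (B : eqType) (v : fsum k B) (b : B) : k :=
  \sum_(x <- v | x.2 == b) x.1.

Definition lext (k : fieldType) (B C : Type) (f : B -> fsum k C) (v : fsum k B)
  : fsum k C :=
  flatten [seq [seq (x.1 * y.1, y.2) | y <- f x.2] | x <- v].

Definition mono0 (N : nat) : mono N := [ffun => 0%N].
Definition monoX (N : nat) (j : 'I_N) : mono N := [ffun i => ((i == j) : nat)].
Definition monoadd (N : nat) (a b : mono N) : mono N := [ffun i => (a i + b i)%N].

(* x^a * x^b = mcoef q a b * x^(a+b) in S_q(V), from x_s x_t = q_{s,t} x_t x_s *)
Definition mcoef (k : fieldType) (N : nat) (q : 'I_N -> 'I_N -> k) (a b : mono N) : k :=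
  \prod_(s : 'I_N) \prod_(t : 'I_N | (t < s)%N) q s t ^+ (a s * b t)%N.

Definition wlist (N : nat) (J : {set 'I_N}) : seq 'I_N := [seq j <- ord_enum N | j \in J].

(* d_p (p >= 1) on the k-basis element x^a (x) x_J (x) x^b (bimodule extension).
   For j = j_i (1-based position i), (-1)^(i+1) = (-1)^#{s in J | s < j}. *)
Definition dK (k : fieldType) (N : nat) (q : 'I_N -> 'I_N -> k) (x : kbasis N)
  : fsum k (kbasis N) :=
  let: (a, J, b) := x in
  flatten [seq
    let sg := (-1) ^+ #|[set s in J | (s < j)%N]| in
    let L := \prod_(s in J | (s <= j)%N) q s j in
    let R := \prod_(s in J | (j <= s)%N) q j s in
    [:: (sg * L * mcoef q a (monoX j), (monoadd a (monoX j), J :\ j, b));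
        (- (sg * R) * mcoef q (monoX j) b, (a, J :\ j, monoadd (monoX j) b))]
  | j : 'I_N <- wlist J].

(* d_0 : A (x) A -> A, multiplication (used on elements with J = set0) *)
Definition d0 (k : fieldType) (N : nat) (q : 'I_N -> 'I_N -> k) (x : kbasis N)
  : fsum k (mono N) :=
  let: (a, _, b) := x in [:: (mcoef q a b, monoadd a b)].

Definition tm1 (k : fieldType) (N : nat) (a : mono N) : fsum k (kbasis N) :=
  [:: (1, (a, set0, mono0 N))].

Definition lambda (k : fieldType) (N : nat) (q : 'I_N -> 'I_N -> k)
  (l : mono N) (J : {set 'I_N}) (m : 'I_N) (r : nat) : k :=
  (\prod_(s : 'I_N | (s < m)%N) \prod_(t : 'I_N | (m <= t)%N) q s t ^+ (l s * l t)%N)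
  * (\prod_(t : 'I_N) q m t ^+ l t) ^+ r.-1
  * (\prod_(j in J) q j m ^+ (l m - r)%N)
  * (\prod_(j in m |: J) \prod_(t : 'I_N | (m < t)%N) q j t ^+ l t).

(* t_p on x^a (x) x_J (x) x^l, left A-linear extension of the formula on
   1 (x) x_J (x) x^l; m = j_{p+1} ranges over indices larger than all of J
   (all indices when J is empty, i.e. the convention j_0 = 0). *)
Definition tK (k : fieldType) (N : nat) (q : 'I_N -> 'I_N -> k) (x : kbasis N)
  : fsum k (kbasis N) :=
  let: (a, J, l) := x in
  flatten [seq
    [seq let L : mono N := [ffun t : 'I_N => if (t < m)%N then 0%N
                              else if t == m then (l m - r)%N else l t] in
         let R : mono N := [ffun t : 'I_N => if (t < m)%N then l t
                              else if t == m then r.-1 else 0%N] in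
         ((-1) ^+ #|J|.+1 * lambda q l J m r * mcoef q a L,
          (monoadd a L, m |: J, R))
    | r <- iota 1 (l m)]
  | m : 'I_N <- [seq m : 'I_N <- ord_enum N | [forall j in J, (j < m)%N]]].

(* Rescale the basis element x^a (x) x_J (x) x^b of K_p by the scalar [gauge (a, J, b)]
   defined by x^a x_J x^b = gauge (a, J, b) x^(a + e_J + b) in S_q(V), reading x_J as the
   monomial x^(e_J).  In the rescaled basis d_p and t_p lose every q: their transposes,
   acting on functionals of the basis, are those of the commutative case q = 1
   ([feval_dK], [feval_tK]); the coefficients lambda of t_p are exactly the ratios of
   gauges that make this happen ([gauge_tK]).  Each such identity compares products of
   powers of the q_{s,t}; as q_{t,s} = q_{s,t}^-1, such a product only depends on the
   antisymmetric part of its matrix of integer exponents, so the identities reduce to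
   linear arithmetic on exponents.  For q = 1 the contraction is classical: in t d + d t
   the mixed terms cancel, and what remains telescopes in the index n at which x^l is cut
   into x^(l_{>=n}), moved to the left, and x^(l_{<n}), kept on the right; n runs from
   just above max J up to N. *)

From HB Require Import structures.
From mathcomp Require Import all_boot all_order all_algebra.
From mathcomp Require Import zify ring.
Set Implicit Arguments. Unset Strict Implicit. Unset Printing Implicit Defensive.
Import GRing.Theory.
Local Open Scope ring_scope.

Section FormalSums.

Variable k : fieldType.

Definition feval (B : Type) (F : B -> k) (w : fsum k B) : k :=
  \sum_(y <- w) y.1 * F y.2.

Lemma feval_cat (B : Type) (F : B -> k) (v w : fsum k B) :
  feval F (v ++ w) = feval F v + feval F w.
Proof. exact: big_cat. Qed.

Lemma feval_seq1 (B : Type) (F : B -> k) (c : k) (y : B) :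
  feval F [:: (c, y)] = c * F y.
Proof. exact: big_seq1. Qed.

Lemma fevalD (B : Type) (F G : B -> k) (v : fsum k B) :
  feval F v + feval G v = feval (fun y => F y + G y) v.
Proof. by rewrite /feval -big_split; apply: eq_bigr => y _; rewrite mulrDr. Qed.

Lemma feval_flatten (B : Type) (F : B -> k) (s : seq (fsum k B)) :
  feval F (flatten s) = \sum_(w <- s) feval F w.
Proof.
elim: s => [|w s IHs]; first by rewrite /feval !big_nil.
by rewrite /= feval_cat IHs big_cons.
Qed.

Lemma feval_lext (B C : Type) (F : C -> k) (f : B -> fsum k C) (v : fsum k B) :
  feval F (lext f v) = feval (fun y => feval F (f y)) v.
Proof.
rewrite /lext feval_flatten big_map; apply: eq_bigr => x _.
by rewrite /feval big_map big_distrr; apply: eq_bigr => y _ /=; rewrite mulrA.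
Qed.

Lemma feval_lext2 (B C D : Type) (F : D -> k) (f : C -> fsum k D) (g : B -> fsum k C)
    (v : fsum k B) :
  feval F (lext f (lext g v)) = feval (fun x => feval F (lext f (g x))) v.
Proof. by rewrite !feval_lext; apply: eq_bigr => x _; rewrite feval_lext. Qed.

Lemma eq_feval (B : Type) (F G : B -> k) (v : fsum k B) :
  F =1 G -> feval F v = feval G v.
Proof. by move=> FG; apply: eq_bigr => y _; rewrite FG. Qed.

Lemma eq_feval_in (B : eqType) (P : pred (k * B)) (F G : B -> k) (v : fsum k B) :
  all P v -> (forall y, P y -> F y.2 = G y.2) -> feval F v = feval G v.
Proof. by move=> /allP Pv FG; apply: eq_big_seq => y /Pv Py; rewrite FG. Qed.

Lemma coef_feval (B : eqType) (v : fsum k B) (b : B) :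
  coef v b = feval (fun y => (y == b)%:R) v.
Proof.
rewrite /coef /feval big_mkcond; apply: eq_bigr => y _.
by case: eqP; rewrite ?mulr1 ?mulr0.
Qed.

End FormalSums.

(* Case analysis on the equalities between index variables and on their memberships in
   index sets; disequalities are recorded in nat, where [lia] can use them. *)
Ltac split_indices :=
  rewrite ?ffunE ?inE ?eqxx /=;
  repeat match goal with
  | |- context [?x == ?y] =>
      is_var x; is_var y;
      case: (eqVneq x y) => [?|/(contra_neq (@ord_inj _ x y)) ?]; [subst x; rewrite ?eqxx /=|]
  end;
  repeat match goal with
  | H : is_true (?x \in ?A) |- context [?x \in ?A] => rewrite H
  | H : is_true (?x \notin ?A) |- context [?x \in ?A] => rewrite (negbTE H)
  | |- context [?x \in ?A] => case: (boolP (x \in A)) => ?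
  end.

Ltac index_arith := repeat (case: ifP => ?; rewrite ?andFb ?andbF /=); lia.

Ltac mono_eq :=
  let t := fresh "t" in apply/ffunP => t; move: (ltn_ord t) => ?; split_indices; index_arith.

Lemma big_ord_enum (R : Type) (idx : R) (op : Monoid.com_law idx) (N : nat)
    (P : pred 'I_N) (F : 'I_N -> R) :
  \big[op/idx]_(i <- ord_enum N | P i) F i = \big[op/idx]_(i | P i) F i.
Proof.
apply: perm_big; apply: uniq_perm (ord_enum_uniq N) (index_enum_uniq _) _ => i.
by rewrite mem_ord_enum mem_index_enum.
Qed.

Lemma telescope_iota (R : zmodType) (g : nat -> R) (n : nat) :
  \sum_(r <- iota 1 n) (g r.-1 - g r) = g 0%N - g n.
Proof.
elim: n => [|n IHn]; first by rewrite big_nil subrr.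
by rewrite -[n.+1]addn1 iotaD big_cat big_seq1 IHn add1n /= addrA subrK addn1.
Qed.

Section Untwisted.

Variables (R : comPzRingType) (N : nat).
Implicit Types (H : kbasis N -> R) (a b l : mono N) (J K : {set 'I_N}) (j m : 'I_N).

Definition lfactor l m r : mono N :=
  [ffun t : 'I_N => if (t < m)%N then 0%N else if t == m then (l m - r)%N else l t].
Definition rfactor l m r : mono N :=
  [ffun t : 'I_N => if (t < m)%N then l t else if t == m then r.-1 else 0%N].

Definition split_at a J l (n : nat) : kbasis N :=
  (monoadd a [ffun t : 'I_N => if (n <= t)%N then l t else 0%N], J,
   [ffun t : 'I_N => if (t < n)%N then l t else 0%N]).

Definition wedge_bound J : nat := \max_(j in J) (nat_of_ord j).+1.

Definition wsign J j : R := (-1) ^+ #|[set s in J | (s < j)%N]|.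

Definition ddiff H j (x : kbasis N) : R :=
  let: (a, K, b) := x in
  H (monoadd a (monoX j), K, b) - H (a, K, monoadd (monoX j) b).

Definition tsum H a J l m : R :=
  \sum_(r <- iota 1 (l m)) H (monoadd a (lfactor l m r), m |: J, rfactor l m r).

(* The transposes of d_p and t_p for q = 1, acting on functionals of the basis. *)
Definition dual_dK H (x : kbasis N) : R :=
  let: (a, J, b) := x in \sum_(j in J) wsign J j * ddiff H j (a, J :\ j, b).

Definition dual_tK H (x : kbasis N) : R :=
  let: (a, J, l) := x in
  (-1) ^+ #|J|.+1 * \sum_(m : 'I_N | [forall j in J, (j < m)%N]) tsum H a J l m.

Definition cross_sum H a J l : R :=
  \sum_(j in J) wsign J j *
    \sum_(m : 'I_N | [forall i in J, (i < m)%N]) tsum (ddiff H j) a (J :\ j) l m.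

Lemma above_boundE J m : [forall j in J, (j < m)%N] = (wedge_bound J <= m)%N.
Proof. by apply/forall_inP/bigmax_leqP => h i iJ; exact: h. Qed.

Lemma wedge_bound_le J : (wedge_bound J <= N)%N.
Proof. by apply/bigmax_leqP => i _; exact: ltn_ord. Qed.

Lemma split_at_N a J l : split_at a J l N = (a, J, l).
Proof. by congr (_, _, _); mono_eq. Qed.

Lemma split_at_0 a J l : split_at a J l 0 = (monoadd a l, J, mono0 N).
Proof. by congr (_, _, _); mono_eq. Qed.

Lemma telescope_above J (F : nat -> R) :
  \sum_(m : 'I_N | [forall j in J, (j < m)%N]) (F m - F m.+1) = F (wedge_bound J) - F N.
Proof.
rewrite (eq_bigl (fun m : 'I_N => (wedge_bound J <= m)%N)) => [|m]; last exact: above_boundE.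
rewrite -(big_geq_mkord (wedge_bound J) N xpredT (fun n => F n - F n.+1)) /=.
rewrite -[LHS]opprK -sumrN; under eq_bigr do rewrite opprB.
by rewrite telescope_sumr ?wedge_bound_le // opprB.
Qed.

Lemma telescope_ddiff H a J l m :
  \sum_(r <- iota 1 (l m)) ddiff H m (monoadd a (lfactor l m r), J, rfactor l m r) =
  H (split_at a J l m) - H (split_at a J l m.+1).
Proof.
pose u r := H (monoadd a (lfactor l m r), J, rfactor l m r.+1).
have -> : H (split_at a J l m) = u 0%N by congr (H (_, _, _)); mono_eq.
have -> : H (split_at a J l m.+1) = u (l m) by congr (H (_, _, _)); mono_eq.
rewrite -telescope_iota; apply: eq_big_seq => r; rewrite mem_iota => /andP[r_gt0 r_le].
by congr (H (_, _, _) - H (_, _, _)); mono_eq.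
Qed.

Lemma dual_dK_setU1 H a b J m : (forall i, i \in J -> (i < m)%N) ->
  dual_dK H (a, m |: J, b) = (-1) ^+ #|J| * ddiff H m (a, J, b) +
    \sum_(j in J) wsign J j * ddiff H j (a, m |: (J :\ j), b).
Proof.
move=> Jm; have mJ : m \notin J by apply/negP => /Jm; rewrite ltnn.
rewrite /dual_dK /wsign big_setU1 //=; congr (_ + _).
  have -> : [set s in m |: J | (s < m)%N] = J.
    apply/setP => s; rewrite !inE; case: (eqVneq s m) => [->|sm] /=.
      by rewrite ltnn (negbTE mJ).
    by case sJ: (s \in J) => //=; rewrite Jm.
  by rewrite setU1K.
apply: eq_bigr => j jJ; have jm := Jm _ jJ.
have -> : [set s in m |: J | (s < j)%N] = [set s in J | (s < j)%N].
  apply/setP => s; rewrite !inE; case: (eqVneq s m) => [->|sm] //=.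
  by rewrite (negbTE mJ) ltnNge ltnW.
have -> // : (m |: J) :\ j = m |: (J :\ j).
apply/setP => s; rewrite !inE; case: (eqVneq s m) => [->|sm] //=.
by rewrite andbT; apply/eqP => e; move: jm; rewrite -e ltnn.
Qed.

Lemma tsum_dual_dK H a J l m : [forall j in J, (j < m)%N] ->
  tsum (dual_dK H) a J l m =
  (-1) ^+ #|J| * (H (split_at a J l m) - H (split_at a J l m.+1)) +
  \sum_(j in J) wsign J j * tsum (ddiff H j) a (J :\ j) l m.
Proof.
move=> /forall_inP Jm; rewrite /tsum -telescope_ddiff mulr_sumr.
under eq_bigr do rewrite dual_dK_setU1 //.
rewrite big_split /= exchange_big; congr (_ + _).
by apply: eq_bigr => j _; rewrite mulr_sumr.
Qed.

Lemma dual_tK_dual_dK H a J l :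
  dual_tK (dual_dK H) (a, J, l) =
  H (split_at a J l N) - H (split_at a J l (wedge_bound J)) +
  (-1) ^+ #|J|.+1 * cross_sum H a J l.
Proof.
rewrite /dual_tK; under eq_bigr => m Jm do rewrite tsum_dual_dK //.
rewrite big_split /=.
rewrite -mulr_sumr (telescope_above J (fun n => H (split_at a J l n))).
rewrite /cross_sum exchange_big /=.
under [X in _ * (_ + X)]eq_bigr do rewrite -mulr_sumr.
have sgnE : (-1) ^+ #|J|.+1 * (-1) ^+ #|J| = -1 :> R.
  by rewrite exprS mulN1r mulNr -expr2 sqrr_sign.
by rewrite mulrDr mulrA sgnE; ring.
Qed.

Lemma tsum_shift H a K l j m :
  tsum H (monoadd a (monoX j)) K l m - tsum H a K (monoadd (monoX j) l) m =
  (if (j < m)%N then tsum (ddiff H j) a K l m else 0) -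
  (if m == j then H (split_at a (j |: K) l j.+1) else 0).
Proof.
rewrite /tsum; case: (ltngtP m j) => [lt_mj | lt_jm | /ord_inj mj].
- have mj : m != j by apply/eqP => e; move: lt_mj; rewrite e ltnn.
  have -> : monoadd (monoX j) l m = l m by rewrite !ffunE (negbTE mj).
  rewrite (negbTE mj) subr0 -sumrB.
  apply: big1_seq => r /andP[_]; rewrite mem_iota => /andP[r_gt0 r_le].
  by apply/eqP; rewrite subr_eq0; apply/eqP; congr (H (_, _, _)); mono_eq.
- have mj : m != j by apply/eqP => e; move: lt_jm; rewrite e ltnn.
  have -> : monoadd (monoX j) l m = l m by rewrite !ffunE (negbTE mj).
  rewrite (negbTE mj) subr0 -sumrB.
  apply: eq_big_seq => r; rewrite mem_iota => /andP[r_gt0 r_le].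
  by congr (H (_, _, _) - H (_, _, _)); mono_eq.
- subst m; have -> : monoadd (monoX j) l j = (l j + 1)%N by rewrite !ffunE eqxx addnC.
  rewrite eqxx sub0r.
  rewrite iotaD big_cat big_seq1 /= opprD addrA -sumrB big1_seq ?add0r.
    by congr (- H (_, _, _)); mono_eq.
  move=> r /andP[_]; rewrite mem_iota => /andP[r_gt0 r_le].
  by apply/eqP; rewrite subr_eq0; apply/eqP; congr (H (_, _, _)); mono_eq.
Qed.

Lemma above_setD1 J j m : j \in J ->
  [forall i in J, (i < m)%N] = [forall i in J :\ j, (i < m)%N] && (j < m)%N.
Proof.
move=> jJ; apply/forall_inP/andP => [Jm | [/forall_inP Km jm] i iJ].
  by split; [apply/forall_inP => i /setD1P[_ /Jm]|apply: Jm].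
by case: (eqVneq i j) => [-> // | ij]; apply: Km; rewrite in_setD1 ij.
Qed.

Lemma ddiff_dual_tK H a J l j : j \in J ->
  ddiff (dual_tK H) j (a, J :\ j, l) =
  (-1) ^+ #|J|.+1 *
    ((if [forall i in J :\ j, (i < j)%N] then H (split_at a J l j.+1) else 0) -
     \sum_(m : 'I_N | [forall i in J, (i < m)%N]) tsum (ddiff H j) a (J :\ j) l m).
Proof.
move=> jJ; rewrite [LHS]/ddiff /dual_tK /= -mulrBr -sumrB.
rewrite (eq_bigr _ (fun m _ => tsum_shift H a (J :\ j) l j m)) sumrB.
have -> : \sum_(m : 'I_N | [forall i in J :\ j, (i < m)%N])
    (if (j < m)%N then tsum (ddiff H j) a (J :\ j) l m else 0) =
    \sum_(m : 'I_N | [forall i in J, (i < m)%N]) tsum (ddiff H j) a (J :\ j) l m.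
  rewrite big_mkcond [RHS]big_mkcond; apply: eq_bigr => m _.
  by rewrite (above_setD1 _ jJ); case: [forall i in _, _]; case: (j < m)%N.
have -> : \sum_(m : 'I_N | [forall i in J :\ j, (i < m)%N])
    (if m == j then H (split_at a (j |: J :\ j) l j.+1) else 0) =
    if [forall i in J :\ j, (i < j)%N] then H (split_at a J l j.+1) else 0.
  rewrite setD1K // big_mkcond (bigD1 j) //= eqxx big1 ?addr0 // => m /negbTE->.
  by case: ifP.
by rewrite (cardsD1 j J) jJ add1n !exprS; case: ifP => _; ring.
Qed.

Lemma wedge_top J : J != set0 ->
  exists2 j0, j0 \in J & wedge_bound J = j0.+1 /\ {in J :\ j0, forall i : 'I_N, (i < j0)%N}.
Proof.
move=> J0; have [j0 j0J top] : {j0 | j0 \in J & wedge_bound J = j0.+1}.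
  by apply: eq_bigmax_cond; rewrite card_gt0.
exists j0 => //; split=> // i.
case/setD1P => ij0 iJ; have : (i < wedge_bound J)%N by apply: leq_bigmax_cond.
rewrite top ltnS leq_eqVlt => /orP[/eqP/ord_inj ij|//].
by move: ij0; rewrite ij eqxx.
Qed.

Lemma sum_wsign_top J (F : nat -> R) : J != set0 ->
  \sum_(j in J) wsign J j *
    ((-1) ^+ #|J|.+1 * (if [forall i in J :\ j, (i < j)%N] then F j.+1 else 0)) =
  F (wedge_bound J).
Proof.
move=> /wedge_top[j0 j0J [-> below]]; rewrite (bigD1 j0) //= big1 ?addr0.
  have -> : [forall i in J :\ j0, (i < j0)%N] by apply/forall_inP.
  rewrite /wsign; have -> : [set s in J | (s < j0)%N] = J :\ j0.
    apply/setP => s; rewrite !inE; case: (eqVneq s j0) => [->|sj0] /=.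
      by rewrite ltnn andbF.
    by case sJ: (s \in J); rewrite //= below // in_setD1 sj0 sJ.
  rewrite (cardsD1 j0 J) j0J add1n mulrA -exprD !addnS addnn -signr_odd /=.
  by rewrite negbK odd_double mul1r.
move=> j /andP[jJ jj0].
have -> // : [forall i in J :\ j, (i < j)%N] = false.
  apply/negbTE/forall_inP => /(_ j0); rewrite in_setD1 eq_sym jj0 j0J => /(_ isT) j0j.
  by move: (below j); rewrite in_setD1 jj0 jJ => /(_ isT); rewrite ltnNge ltnW.
by rewrite !mulr0.
Qed.

Lemma dual_dK_dual_tK H a J l : J != set0 ->
  dual_dK (dual_tK H) (a, J, l) =
  H (split_at a J l (wedge_bound J)) - (-1) ^+ #|J|.+1 * cross_sum H a J l.
Proof.
move=> J0; rewrite -(sum_wsign_top (fun n => H (split_at a J l n)) J0).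
rewrite /cross_sum mulr_sumr -sumrB; apply: eq_bigr => j jJ.
by rewrite ddiff_dual_tK // mulrBr mulrBr; congr (_ - _); exact: mulrCA.
Qed.

Lemma dual_homotopy H a J l : J != set0 ->
  dual_tK (dual_dK H) (a, J, l) + dual_dK (dual_tK H) (a, J, l) = H (a, J, l).
Proof.
by move=> J0; rewrite dual_tK_dual_dK dual_dK_dual_tK // split_at_N; ring.
Qed.

Lemma dual_homotopy0 H a l :
  dual_tK (dual_dK H) (a, set0, l) + H (monoadd a l, set0, mono0 N) = H (a, set0, l).
Proof.
have bound0 : wedge_bound set0 = 0%N by rewrite /wedge_bound big_pred0 // => i; rewrite inE.
rewrite dual_tK_dual_dK bound0 split_at_N split_at_0 /cross_sum big_pred0 => [|i]; last first.
  by rewrite inE.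
by rewrite mulr0 addr0 subrK.
Qed.

End Untwisted.

Section QuantumGauge.

Variables (k : fieldType) (N : nat) (q : 'I_N -> 'I_N -> k).
Hypothesis q_neq0 : forall i j, q i j != 0.
Hypothesis q_diag : forall i, q i i = 1.
Hypothesis q_inv : forall i j, q j i = (q i j)^-1.

Definition qpow (G : 'I_N -> 'I_N -> int) : k :=
  \prod_(s : 'I_N) \prod_(t : 'I_N) q s t ^ G s t.

Lemma qpow_neq0 G : qpow G != 0.
Proof. by apply/prodf_neq0 => s _; apply/prodf_neq0 => t _; exact: expfz_neq0. Qed.

Lemma qpowD G1 G2 : qpow G1 * qpow G2 = qpow (fun s t => G1 s t + G2 s t).
Proof.
rewrite /qpow -big_split; apply: eq_bigr => s _; rewrite -big_split.
by apply: eq_bigr => t _; rewrite expfzDr.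
Qed.

Lemma qpowX G (n : nat) : qpow G ^+ n = qpow (fun s t => G s t * n%:Z).
Proof.
elim: n => [|n IHn].
  by rewrite expr0; symmetry; apply: big1 => s _; apply: big1 => t _; rewrite mulr0.
rewrite exprS IHn qpowD; apply: eq_bigr => s _; apply: eq_bigr => t _.
by rewrite -addn1 PoszD mulrDr mulr1 addrC.
Qed.

Lemma qpow_skew G :
  qpow G = \prod_(s : 'I_N) \prod_(t : 'I_N | (t < s)%N) q s t ^ (G s t - G t s).
Proof.
have upper : \prod_(s : 'I_N) \prod_(t : 'I_N | ~~ (t < s)%N) q s t ^ G s t
    = \prod_(s : 'I_N) \prod_(t : 'I_N | (t < s)%N) q s t ^ (- G t s).
  transitivity (\prod_(s : 'I_N) \prod_(t : 'I_N) if (s < t)%N then q s t ^ G s t else 1).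
    apply: eq_bigr => s _; rewrite big_mkcond; apply: eq_bigr => t _.
    by case: ltngtP => // /ord_inj ->; rewrite q_diag exp1rz.
  rewrite exchange_big; apply: eq_bigr => s _; rewrite [RHS]big_mkcond.
  by apply: eq_bigr => t _; case: ifP => // _; rewrite q_inv exprz_inv.
rewrite /qpow; under eq_bigr => s _ do rewrite (bigID (fun t : 'I_N => (t < s)%N)) /=.
rewrite big_split upper -big_split; apply: eq_bigr => s _.
by rewrite -big_split; apply: eq_bigr => t _; rewrite expfzDr.
Qed.

Lemma eq_qpow G1 G2 :
  (forall s t : 'I_N, (t < s)%N -> G1 s t - G1 t s = G2 s t - G2 t s) ->
  qpow G1 = qpow G2.
Proof.
move=> G12; rewrite !qpow_skew; apply: eq_bigr => s _.
by apply: eq_bigr => t ts; rewrite G12.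
Qed.

Lemma prod_qpowE (P : pred 'I_N) (Q : 'I_N -> pred 'I_N) (n : 'I_N -> 'I_N -> nat) :
  \prod_(s | P s) \prod_(t | Q s t) q s t ^+ n s t =
  qpow (fun s t => if P s && Q s t then (n s t)%:Z else 0).
Proof.
rewrite /qpow big_mkcond; apply: eq_bigr => s _; case: (P s) => /=.
  by rewrite big_mkcond; apply: eq_bigr => t _; case: (Q s t).
by rewrite big1.
Qed.

Lemma col_qpowE (P : pred 'I_N) (m : 'I_N) (n : 'I_N -> nat) :
  \prod_(s | P s) q s m ^+ n s = qpow (fun s t => if P s && (t == m) then (n s)%:Z else 0).
Proof.
by rewrite -prod_qpowE; apply: eq_bigr => s _; rewrite big_pred1_eq.
Qed.

Lemma row_qpowE (Q : pred 'I_N) (m : 'I_N) (n : 'I_N -> nat) :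
  \prod_(t | Q t) q m t ^+ n t = qpow (fun s t => if (s == m) && Q t then (n t)%:Z else 0).
Proof.
by rewrite -prod_qpowE big_pred1_eq.
Qed.

Lemma mcoef_qpowE (a b : mono N) :
  mcoef q a b = qpow (fun s t => if (t < s)%N then (a s * b t)%N%:Z else 0).
Proof. exact: (prod_qpowE predT). Qed.

Definition wedge_mono (J : {set 'I_N}) : mono N := [ffun i => (i \in J : nat)].

(* x^a x_J x^b = gauge (a, J, b) x^(a + e_J + b), with e_J = [wedge_mono J]. *)
Definition gauge (x : kbasis N) : k :=
  let: (a, J, b) := x in
  mcoef q a (wedge_mono J) * mcoef q a b * mcoef q (wedge_mono J) b.

Lemma gauge_neq0 x : gauge x != 0.
Proof. by case: x => [[a J] b]; rewrite /gauge !mcoef_qpowE !mulf_neq0 ?qpow_neq0. Qed.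

Lemma gauge_dK_left (a b : mono N) (J : {set 'I_N}) (j : 'I_N) : j \in J ->
  (\prod_(s in J | (s <= j)%N) q s j) * mcoef q a (monoX j) *
    gauge (monoadd a (monoX j), J :\ j, b) = gauge (a, J, b).
Proof.
move=> jJ; under eq_bigr do rewrite -[q _ j]expr1.
rewrite /gauge col_qpowE !mcoef_qpowE !qpowD //; apply: eq_qpow => // s t ts.
split_indices; index_arith.
Qed.

Lemma gauge_dK_right (a b : mono N) (J : {set 'I_N}) (j : 'I_N) : j \in J ->
  (\prod_(s in J | (j <= s)%N) q j s) * mcoef q (monoX j) b *
    gauge (a, J :\ j, monoadd (monoX j) b) = gauge (a, J, b).
Proof.
move=> jJ; under eq_bigr do rewrite -[q j _]expr1.
rewrite /gauge row_qpowE !mcoef_qpowE !qpowD //; apply: eq_qpow => // s t ts.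
split_indices; index_arith.
Qed.

Lemma gauge_tK (a l : mono N) (J : {set 'I_N}) (m : 'I_N) (r : nat) :
  (forall j, j \in J -> (j < m)%N) -> (1 <= r <= l m)%N ->
  lambda q l J m r * mcoef q a (lfactor l m r) *
    gauge (monoadd a (lfactor l m r), m |: J, rfactor l m r) = gauge (a, J, l).
Proof.
move=> Jm /andP[r_gt0 r_le]; have mJ : m \notin J by apply/negP => /Jm; rewrite ltnn.
have [x lmE] : exists x, l m = (x + r)%N by exists (l m - r)%N; rewrite subnK.
case: r r_gt0 {r_le} lmE => // r _ lmE.
rewrite /lambda /gauge !mcoef_qpowE (prod_qpowE (fun s => (s < m)%N)).
rewrite (row_qpowE predT) qpowX // (col_qpowE (mem J)).
rewrite (prod_qpowE (mem (m |: J))) !qpowD //; apply: eq_qpow => // s t ts.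
split_indices.
all: repeat match goal with H : is_true (?x \in _) |- _ => move: (Jm _ H) => ?; clear H end.
all: rewrite ?lmE ?addnK /=; index_arith.
Qed.

Lemma mcoef_mono0l b : mcoef q (mono0 N) b = 1.
Proof. by apply: big1 => s _; apply: big1 => t _; rewrite ffunE mul0n expr0. Qed.

Lemma mcoef_mono0r a : mcoef q a (mono0 N) = 1.
Proof. by apply: big1 => s _; apply: big1 => t _; rewrite ffunE muln0 expr0. Qed.

Lemma wedge_mono0 : wedge_mono set0 = mono0 N.
Proof. by apply/ffunP => t; rewrite !ffunE inE. Qed.

Lemma gauge_set0 a b : gauge (a, set0, b) = mcoef q a b.
Proof. by rewrite /gauge wedge_mono0 mcoef_mono0l mcoef_mono0r mulr1 mul1r. Qed.

Lemma feval_dK H x :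
  feval (fun y => gauge y * H y) (dK q x) = gauge x * dual_dK H x.
Proof.
case: x => [[a J] b]; rewrite /dK /dual_dK feval_flatten big_map /wlist big_filter.
rewrite big_ord_enum mulr_sumr; apply: eq_bigr => j jJ.
have El := gauge_dK_left a b jJ; have Er := gauge_dK_right a b jJ; rewrite /= in El Er.
rewrite /feval !big_cons big_nil /= /wsign mulrBr mulrBr -{1}El -Er; ring.
Qed.

Lemma feval_tK H x :
  feval (fun y => gauge y * H y) (tK q x) = gauge x * dual_tK H x.
Proof.
case: x => [[a J] l]; rewrite /tK /dual_tK feval_flatten big_map big_filter.
rewrite big_ord_enum mulrCA !mulr_sumr; apply: eq_bigr => m /forall_inP Jm.
rewrite /feval /tsum big_map !mulr_sumr; apply: eq_big_seq => r.
rewrite mem_iota add1n ltnS => r_range.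
have E := gauge_tK a Jm r_range; rewrite /lfactor /rfactor /= in E *.
by rewrite -E; ring.
Qed.

Lemma gaugeK (F : kbasis N -> k) : F =1 (fun y => gauge y * (F y / gauge y)).
Proof. by move=> y; rewrite mulrC divfK ?gauge_neq0. Qed.

Lemma homotopy_tK_dK (F : kbasis N -> k) x : x.1.2 != set0 ->
  feval F (lext (tK q) (dK q x)) + feval F (lext (dK q) (tK q x)) = F x.
Proof.
move=> J0; pose H y := F y / gauge y.
rewrite !(eq_feval _ (gaugeK F)) !feval_lext (eq_feval _ (feval_tK H)) feval_dK.
rewrite (eq_feval _ (feval_dK H)) feval_tK -mulrDr addrC [RHS]gaugeK.
by case: x J0 => [[a J] l] J0; rewrite dual_homotopy.
Qed.

Lemma homotopy_tm1_d0 (F : kbasis N -> k) a l :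
  feval F (lext (@tm1 k N) (d0 q (a, set0, l))) + feval F (lext (dK q) (tK q (a, set0, l))) =
  F (a, set0, l).
Proof.
pose H y := F y / gauge y.
rewrite !(eq_feval _ (gaugeK F)) !feval_lext (eq_feval _ (feval_dK H)) feval_tK.
rewrite /d0 /tm1 !feval_seq1 mul1r gauge_set0 mcoef_mono0r mul1r divr1 -gauge_set0.
rewrite -mulrDr addrC [RHS]gaugeK -[F (a, set0, l) / _]/(H (a, set0, l)).
by rewrite -(dual_homotopy0 H a l) /H !gauge_set0 !mcoef_mono0r !divr1.
Qed.

End QuantumGauge.

Theorem mainTheorem3 (k : fieldType) (N : nat) (q : 'I_N -> 'I_N -> k)
  (q_neq0 : forall i j, q i j != 0)
  (q_diag : forall i, q i i = 1)
  (q_inv : forall i j, q j i = (q i j)^-1) :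
  (* d_0 t_{-1} = Id_A *)
  (forall (v : fsum k (mono N)) (b : mono N),
     coef (lext (d0 q) (lext (@tm1 k N) v)) b = coef v b)
  /\
  (* t_{-1} d_0 + d_1 t_0 = Id_{K_0} *)
  (forall (v : fsum k (kbasis N)), all (fun x : k * kbasis N => #|x.2.1.2| == 0%N) v ->
     forall b : kbasis N,
     coef (lext (@tm1 k N) (lext (d0 q) v) ++ lext (dK q) (lext (tK q) v)) b
     = coef v b)
  /\
  (* t_{p-1} d_p + d_{p+1} t_p = Id_{K_p} for p >= 1 *)
  (forall (p : nat), (1 <= p)%N ->
   forall (v : fsum k (kbasis N)), all (fun x : k * kbasis N => #|x.2.1.2| == p) v ->
     forall b : kbasis N,
     coef (lext (tK q) (lext (dK q) v) ++ lext (dK q) (lext (tK q) v)) b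
     = coef v b).
Proof.
split; [|split].
- move=> v b; rewrite !coef_feval feval_lext2; apply: eq_feval => a.
  rewrite /tm1 /d0 /lext /= feval_seq1 mul1r mcoef_mono0r mul1r.
  by congr (_ == _)%:R; apply/ffunP => t; rewrite !ffunE addn0.
- move=> v v0 b; rewrite !coef_feval feval_cat !feval_lext2 fevalD.
  apply: (eq_feval_in v0) => -[c [[a J] l]] /= /eqP/cards0_eq ->.
  exact: homotopy_tm1_d0.
- move=> p p_gt0 v vp b; rewrite !coef_feval feval_cat !feval_lext2 fevalD.
  apply: (eq_feval_in vp) => -[c x] /= /eqP px.
  by apply: homotopy_tK_dK => //; rewrite -card_gt0 px.
Qed.
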